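(* Let $X,Y$ be real Hilbert spaces and $a:X\times Y\to\mathbb{R}\cup\{+\infty\}$ such that for every $y\in Y$ the function $a(\cdot,y)$ is proper and $\Phi_{lsc}$-convex on $X$, and for every $x\in X$ the function $a(x,\cdot)$ is concave on $Y$. Assume $\beta:=\inf_{x\in X}\sup_{y\in Y}a(x,y)<+\infty$. If there exist $y_1,y_2\in Y$ and $\bar x\in\mathrm{dom}\,a(\cdot,y_1)\cap\mathrm{dom}\,a(\cdot,y_2)$ with $a(\bar x,y_1)\ge\beta$ and $a(\bar x,y_2)\ge\beta$ such that $a(\cdot,y_1)$ and $a(\cdot,y_2)$ satisfy $ZS(0,\bar x)$, then $\sup_{y\in Y}\inf_{x\in X}a(x,y)=\inf_{x\in X}\sup_{y\in Y}a(x,y)$.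
   Context: $\Phi_{lsc}$ is the class of functions $\varphi(x)=-a\|x\|^2+\langle v,x\rangle+c$ ($a\ge0$, $v\in X^*$, $c\in\mathbb{R}$); $\mathrm{supp}(f)=\{\varphi\in\Phi_{lsc}:\varphi\le f\}$; $f$ is $\Phi_{lsc}$-convex if $f=\sup\mathrm{supp}(f)$ pointwise; proper means $\mathrm{supp}(f)\ne\emptyset$ and $\mathrm{dom}(f)\ne\emptyset$. $\partial_{lsc}f(\bar x)$ is the set of $(a,v)\in\mathbb{R}_+\times X^*$ with $f(x)-f(\bar x)\ge\langle v,x-\bar x\rangle-a\|x\|^2+a\|\bar x\|^2$ for all $x\in X$. Functions $f,g$ satisfy $ZS(0,\bar x)$ if $0=(0,0)\in\mathrm{co}(\partial_{lsc}f(\bar x)\cup\partial_{lsc}g(\bar x))$, convex hull in $\mathbb{R}\times X^*$. *)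

From Stdlib Require Import Reals List.
Open Scope R_scope.

Record Hilbert := {
  hcar :> Type;
  hzero : hcar;
  hadd : hcar -> hcar -> hcar;
  hopp : hcar -> hcar;
  hscal : R -> hcar -> hcar;
  hinner : hcar -> hcar -> R;
  hadd_assoc : forall x y z, hadd x (hadd y z) = hadd (hadd x y) z;
  hadd_comm : forall x y, hadd x y = hadd y x;
  hadd_zero : forall x, hadd x hzero = x;
  hadd_opp : forall x, hadd x (hopp x) = hzero;
  hscal_one : forall x, hscal 1 x = x;
  hscal_assoc : forall a b x, hscal a (hscal b x) = hscal (a * b) x;
  hscal_distr_l : forall a x y, hscal a (hadd x y) = hadd (hscal a x) (hscal a y);
  hscal_distr_r : forall a b x, hscal (a + b) x = hadd (hscal a x) (hscal b x);
  hinner_sym : forall x y, hinner x y = hinner y x;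
  hinner_add : forall x y z, hinner (hadd x y) z = hinner x z + hinner y z;
  hinner_scal : forall a x y, hinner (hscal a x) y = a * hinner x y;
  hinner_pos : forall x, 0 <= hinner x x;
  hinner_def : forall x, hinner x x = 0 -> x = hzero;
  hcomplete : forall u : nat -> hcar,
    (forall eps, 0 < eps -> exists N, forall m n, (N <= m)%nat -> (N <= n)%nat ->
        hinner (hadd (u m) (hopp (u n))) (hadd (u m) (hopp (u n))) < eps) ->
    exists l, forall eps, 0 < eps -> exists N, forall n, (N <= n)%nat ->
        hinner (hadd (u n) (hopp l)) (hadd (u n) (hopp l)) < eps
}.

Arguments hzero {h}.
Arguments hadd {h}.
Arguments hopp {h}.
Arguments hscal {h}.
Arguments hinner {h}.

Definition hsub {X : Hilbert} (x y : X) : X := hadd x (hopp y).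
Definition hnorm2 {X : Hilbert} (x : X) : R := hinner x x.

Inductive ER := Fin (r : R) | pinf | ninf.

Definition ER_le (x y : ER) : Prop :=
  match x, y with
  | ninf, _ => True
  | _, pinf => True
  | Fin a, Fin b => a <= b
  | _, _ => False
  end.

Definition is_sup_on {I : Type} (P : I -> Prop) (g : I -> ER) (s : ER) : Prop :=
  (forall i, P i -> ER_le (g i) s) /\
  (forall b, (forall i, P i -> ER_le (g i) b) -> ER_le s b).

Definition is_inf_on {I : Type} (P : I -> Prop) (g : I -> ER) (s : ER) : Prop :=
  (forall i, P i -> ER_le s (g i)) /\
  (forall b, (forall i, P i -> ER_le b (g i)) -> ER_le b s).

Definition is_sup {I : Type} (g : I -> ER) (s : ER) := is_sup_on (fun _ => True) g s.
Definition is_inf {I : Type} (g : I -> ER) (s : ER) := is_inf_on (fun _ => True) g s.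

(** The elementary function x |-> -a ||x||^2 + <v,x> + c
    (X^* is identified with X via the Riesz representation). *)
Record PhiLsc (X : Hilbert) := mkPhi { phi_a : R; phi_v : X; phi_c : R }.
Arguments phi_a {X}. Arguments phi_v {X}. Arguments phi_c {X}.

Definition phi_eval {X : Hilbert} (p : PhiLsc X) (x : X) : R :=
  - phi_a p * hnorm2 x + hinner (phi_v p) x + phi_c p.

Definition in_supp {X : Hilbert} (f : X -> ER) (p : PhiLsc X) : Prop :=
  0 <= phi_a p /\ forall x, ER_le (Fin (phi_eval p x)) (f x).

Definition dom {X : Hilbert} (f : X -> ER) (x : X) : Prop := exists r, f x = Fin r.

Definition Phi_convex {X : Hilbert} (f : X -> ER) : Prop :=
  forall x, is_sup_on (in_supp f) (fun p => Fin (phi_eval p x)) (f x).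

Definition proper {X : Hilbert} (f : X -> ER) : Prop :=
  (exists p, in_supp f p) /\ (exists x, dom f x).

Definition lsc_subdiff {X : Hilbert} (f : X -> ER) (xbar : X) (a : R) (v : X) : Prop :=
  0 <= a /\ exists fx, f xbar = Fin fx /\
  forall x, ER_le (Fin (fx + hinner v (hsub x xbar) - a * hnorm2 x + a * hnorm2 xbar)) (f x).

(** (0,0) belongs to the convex hull (finite convex combinations) of
    lsc_subdiff f xbar U lsc_subdiff g xbar in R x X^* *)
Definition ZS0 {X : Hilbert} (f g : X -> ER) (xbar : X) : Prop :=
  exists l : list (R * (R * X)),
    Forall (fun t => 0 <= fst t /\
       (lsc_subdiff f xbar (fst (snd t)) (snd (snd t)) \/
        lsc_subdiff g xbar (fst (snd t)) (snd (snd t)))) l /\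
    fold_right (fun t s => fst t + s) 0 l = 1 /\
    fold_right (fun t s => fst t * fst (snd t) + s) 0 l = 0 /\
    fold_right (fun t s => hadd (hscal (fst t) (snd (snd t))) s) hzero l = hzero.

(** concavity of h : Y -> R U {+oo}: its hypograph is convex *)
Definition concave {Y : Hilbert} (h : Y -> ER) : Prop :=
  forall y1 y2 r1 r2 t, 0 <= t <= 1 ->
    ER_le (Fin r1) (h y1) -> ER_le (Fin r2) (h y2) ->
    ER_le (Fin (t * r1 + (1 - t) * r2)) (h (hadd (hscal t y1) (hscal (1 - t) y2))).

(** The convex combination witnessing ZS(0, x̄) has total quadratic part
    [sum λ_i a_i = 0] with nonnegative terms, so every subgradient carrying
    positive weight is affine.  Grouping the weights by function gives
    [μ] on [a(·,y1)] and [1-μ] on [a(·,y2)], with aggregated linear parts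
    cancelling; hence
    [μ a(x,y1) + (1-μ) a(x,y2) >= μ a(x̄,y1) + (1-μ) a(x̄,y2) >= β] for all [x].
    Concavity in [y] turns this into [a(x, μ y1 + (1-μ) y2) >= β], so the
    infimum at that point is at least [β]. *)
From Stdlib Require Import Reals List Lra.
Open Scope R_scope.

Lemma ER_le_trans x y z : ER_le x y -> ER_le y z -> ER_le x z.
Proof. destruct x, y, z; simpl; intros; auto; try lra; contradiction. Qed.

Lemma fold_right_sum_ge0 {T : Type} (g : T -> R) (l : list T) :
  Forall (fun t => 0 <= g t) l -> 0 <= fold_right (fun t s => g t + s) 0 l.
Proof. induction 1; simpl; lra. Qed.

Lemma fold_right_sum_eq0 {T : Type} (g : T -> R) (l : list T) :
  Forall (fun t => 0 <= g t) l ->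
  fold_right (fun t s => g t + s) 0 l = 0 -> Forall (fun t => g t = 0) l.
Proof.
  induction 1 as [|t l Ht Hl IH]; simpl; intros Hs; constructor;
    pose proof (fold_right_sum_ge0 g l Hl); [lra | apply IH; lra].
Qed.

Section HilbertFacts.

Variable X : Hilbert.

Lemma hadd_idem_eq0 (u : X) : hadd u u = u -> u = hzero.
Proof.
  intros Hu.
  transitivity (hadd u (hadd u (hopp u))).
  - rewrite hadd_opp, hadd_zero. reflexivity.
  - rewrite hadd_assoc, Hu. apply hadd_opp.
Qed.

Lemma hscal0 (v : X) : hscal 0 v = hzero.
Proof.
  apply hadd_idem_eq0. rewrite <- hscal_distr_r. f_equal. ring.
Qed.

Lemma hinner0 (d : X) : hinner hzero d = 0.
Proof.
  pose proof (hinner_add X hzero hzero d) as H. rewrite hadd_zero in H. lra.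
Qed.

(** For [mu > 0] this says that [(0, w/mu)] lies in [∂_lsc f xbar]. *)
Definition scaled_subgradient (f : X -> ER) (xbar : X) (mu : R) (w : X) : Prop :=
  (mu = 0 -> w = hzero) /\
  forall F x z, f xbar = Fin F -> f x = Fin z ->
    mu * F + hinner w (hsub x xbar) <= mu * z.

Lemma scaled_subgradient0 f xbar : scaled_subgradient f xbar 0 hzero.
Proof. split; auto. intros F x z _ _. rewrite hinner0. lra. Qed.

Lemma scaled_subgradientD f xbar m1 m2 w1 w2 :
  0 <= m1 -> 0 <= m2 ->
  scaled_subgradient f xbar m1 w1 -> scaled_subgradient f xbar m2 w2 ->
  scaled_subgradient f xbar (m1 + m2) (hadd w1 w2).
Proof.
  intros Hm1 Hm2 [Z1 H1] [Z2 H2]. split.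
  - intros Hm. rewrite Z1, Z2 by lra. apply hadd_zero.
  - intros F x z HF Hz. rewrite hinner_add.
    specialize (H1 F x z HF Hz). specialize (H2 F x z HF Hz). lra.
Qed.

Lemma scaled_subgradient_lsc_subdiff f xbar lam q v :
  0 <= lam -> lam * q = 0 -> lsc_subdiff f xbar q v ->
  scaled_subgradient f xbar lam (hscal lam v).
Proof.
  intros Hlam Hq [_ [Fx [HFx Hsub]]]. split.
  - intros ->. apply hscal0.
  - intros F x z HF Hz. rewrite HF in HFx. injection HFx as <-.
    specialize (Hsub x). rewrite Hz in Hsub. simpl in Hsub.
    rewrite hinner_scal.
    apply (Rmult_le_compat_l lam) in Hsub; [|exact Hlam].
    replace (lam * (F + hinner v (hsub x xbar) - q * hnorm2 x + q * hnorm2 xbar))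
      with (lam * F + lam * hinner v (hsub x xbar)
            - (lam * q) * hnorm2 x + (lam * q) * hnorm2 xbar) in Hsub by ring.
    rewrite Hq in Hsub. lra.
Qed.

Lemma convex_combination_split (f g : X -> ER) (xbar : X) (l : list (R * (R * X))) :
  Forall (fun t => 0 <= fst t /\ fst t * fst (snd t) = 0 /\
    (lsc_subdiff f xbar (fst (snd t)) (snd (snd t)) \/
     lsc_subdiff g xbar (fst (snd t)) (snd (snd t)))) l ->
  exists mu nu w1 w2, 0 <= mu /\ 0 <= nu /\
    mu + nu = fold_right (fun t s => fst t + s) 0 l /\
    hadd w1 w2 = fold_right (fun t s => hadd (hscal (fst t) (snd (snd t))) s) hzero l /\
    scaled_subgradient f xbar mu w1 /\ scaled_subgradient g xbar nu w2.
Proof.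
  induction 1 as [|[lam [q v]] l [Hlam [Hq Hfg]] _ IH]; simpl in *.
  - exists 0, 0, hzero, hzero.
    repeat split; try lra; try apply hadd_zero; apply scaled_subgradient0.
  - destruct IH as (mu & nu & w1 & w2 & Hmu & Hnu & Hsum & Hw & S1 & S2).
    rewrite <- Hsum, <- Hw.
    destruct Hfg as [Hf | Hg].
    + exists (lam + mu), nu, (hadd (hscal lam v) w1), w2.
      split; [lra | split; [lra | split; [lra | split; [| split; [| exact S2]]]]].
      * symmetry. apply hadd_assoc.
      * apply scaled_subgradientD; auto.
        exact (scaled_subgradient_lsc_subdiff f xbar lam q v Hlam Hq Hf).
    + exists mu, (lam + nu), w1, (hadd (hscal lam v) w2).
      split; [lra | split; [lra | split; [lra | split; [| split; [exact S1 |]]]]].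
      * rewrite !hadd_assoc. f_equal. apply hadd_comm.
      * apply scaled_subgradientD; auto.
        exact (scaled_subgradient_lsc_subdiff g xbar lam q v Hlam Hq Hg).
Qed.

Lemma ZS0_scaled_subgradients (f g : X -> ER) (xbar : X) :
  ZS0 f g xbar ->
  exists mu w1 w2, 0 <= mu <= 1 /\ hadd w1 w2 = hzero /\
    scaled_subgradient f xbar mu w1 /\ scaled_subgradient g xbar (1 - mu) w2.
Proof.
  intros (l & Hl & Hweights & Hquad & Hlin).
  assert (Hquad0 : Forall (fun t => fst t * fst (snd t) = 0) l).
  { apply (fold_right_sum_eq0 (fun t => fst t * fst (snd t))); [|exact Hquad].
    eapply Forall_impl; [|exact Hl]. simpl.
    intros t [H0 [[Hq _] | [Hq _]]]; apply Rmult_le_pos; auto. }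
  assert (Hl' : Forall (fun t => 0 <= fst t /\ fst t * fst (snd t) = 0 /\
    (lsc_subdiff f xbar (fst (snd t)) (snd (snd t)) \/
     lsc_subdiff g xbar (fst (snd t)) (snd (snd t)))) l).
  { rewrite Forall_forall in *. intros t Ht.
    destruct (Hl t Ht). auto. }
  destruct (convex_combination_split f g xbar l Hl')
    as (mu & nu & w1 & w2 & Hmu & Hnu & Hsum & Hw & S1 & S2).
  rewrite Hweights in Hsum. rewrite Hlin in Hw.
  exists mu, w1, w2. replace (1 - mu) with nu by lra.
  split; [lra | auto].
Qed.

End HilbertFacts.

Lemma scaled_bound_real (e : ER) (mu F c : R) :
  0 <= mu -> e <> ninf -> (mu = 0 -> c = 0) ->
  (forall z, e = Fin z -> mu * F + c <= mu * z) ->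
  exists r, ER_le (Fin r) e /\ mu * F + c <= mu * r.
Proof.
  intros Hmu He Hc Hfin. destruct e as [z| |]; [| | contradiction].
  - exists z. split; [simpl; lra | auto].
  - destruct (Req_dec mu 0) as [H0 | H0].
    + exists 0. split; [exact I|]. rewrite H0, (Hc H0). lra.
    + exists (F + c / mu). split; [exact I|]. right. field. exact H0.
Qed.

Lemma ZS0_convex_minorant (X : Hilbert) (f g : X -> ER) (xbar : X) (F G : R) :
  (forall x, f x <> ninf) -> (forall x, g x <> ninf) ->
  f xbar = Fin F -> g xbar = Fin G -> ZS0 f g xbar ->
  exists mu, 0 <= mu <= 1 /\ forall x, exists r1 r2,
    ER_le (Fin r1) (f x) /\ ER_le (Fin r2) (g x) /\
    mu * F + (1 - mu) * G <= mu * r1 + (1 - mu) * r2.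
Proof.
  intros Hf Hg HF HG HZS.
  destruct (ZS0_scaled_subgradients X f g xbar HZS)
    as (mu & w1 & w2 & Hmu & Hw & [Z1 S1] & [Z2 S2]).
  exists mu. split; [exact Hmu|]. intros x.
  destruct (scaled_bound_real (f x) mu F (hinner w1 (hsub x xbar)))
    as [r1 [Hr1 E1]]; auto; [lra | intros H; rewrite Z1; auto; apply hinner0 |].
  destruct (scaled_bound_real (g x) (1 - mu) G (hinner w2 (hsub x xbar)))
    as [r2 [Hr2 E2]]; auto; [lra | intros H; rewrite Z2; auto; apply hinner0 |].
  exists r1, r2. repeat split; auto.
  assert (hinner w1 (hsub x xbar) + hinner w2 (hsub x xbar) = 0).
  { rewrite <- hinner_add, Hw. apply hinner0. }
  lra.
Qed.

Lemma weak_duality {X Y : Type} (a : X -> Y -> ER) supa infa beta :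
  (forall x, is_sup (fun y => a x y) (supa x)) ->
  (forall y, is_inf (fun x => a x y) (infa y)) ->
  is_inf supa beta -> forall y, ER_le (infa y) beta.
Proof.
  intros Hsupa Hinfa Hbeta y. apply (proj2 Hbeta). intros x _.
  apply ER_le_trans with (a x y).
  - apply (proj1 (Hinfa y)); auto.
  - apply (proj1 (Hsupa x)); auto.
Qed.

Lemma is_sup_attained {I : Type} (g : I -> ER) (s : ER) (i0 : I) :
  (forall i, ER_le (g i) s) -> ER_le s (g i0) -> is_sup g s.
Proof.
  intros Hub Hi0. split.
  - intros i _. apply Hub.
  - intros b Hb. apply ER_le_trans with (g i0); auto.
Qed.

Theorem mainTheorem14 (X Y : Hilbert) (a : X -> Y -> ER)
  (Ha_val : forall x y, a x y <> ninf)
  (Ha_proper : forall y, proper (fun x => a x y))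
  (Ha_conv : forall y, Phi_convex (fun x => a x y))
  (Ha_conc : forall x, concave (fun y => a x y))
  (supa : X -> ER) (Hsupa : forall x, is_sup (fun y => a x y) (supa x))
  (infa : Y -> ER) (Hinfa : forall y, is_inf (fun x => a x y) (infa y))
  (beta : ER) (Hbeta : is_inf supa beta) (Hbeta_fin : beta <> pinf)
  (y1 y2 : Y) (xbar : X)
  (Hdom1 : dom (fun x => a x y1) xbar) (Hdom2 : dom (fun x => a x y2) xbar)
  (Hge1 : ER_le beta (a xbar y1)) (Hge2 : ER_le beta (a xbar y2))
  (HZS : ZS0 (fun x => a x y1) (fun x => a x y2) xbar) :
  is_sup infa beta.
Proof.
  destruct Hdom1 as [F1 HF1], Hdom2 as [F2 HF2]. simpl in HF1, HF2.
  destruct (ZS0_convex_minorant X _ _ xbar F1 F2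
              (fun x => Ha_val x y1) (fun x => Ha_val x y2) HF1 HF2 HZS)
    as [mu [Hmu Hmin]].
  apply is_sup_attained with (hadd (hscal mu y1) (hscal (1 - mu) y2)).
  - exact (weak_duality a supa infa beta Hsupa Hinfa Hbeta).
  - apply (proj2 (Hinfa _)). intros x _.
    destruct (Hmin x) as (r1 & r2 & Hr1 & Hr2 & Hr).
    apply ER_le_trans with (Fin (mu * r1 + (1 - mu) * r2)).
    + rewrite HF1 in Hge1. rewrite HF2 in Hge2.
      destruct beta as [B| |]; simpl in *; [nra | contradiction | exact I].
    + exact (Ha_conc x y1 y2 r1 r2 mu Hmu Hr1 Hr2).
Qed.
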